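(* Let $f(X)=\frac12\langle X,\mathcal A(X)\rangle-\langle B^\star,X\rangle$ where $\mathcal A$ is a symmetric positive semidefinite linear operator on $\mathbb{R}^{m\times n}$, $B^\star=\mathcal A(M^\star)$ and $M^\star\in\mathcal M_k$. Suppose Assumption RPD$(M^\star,\beta)$ holds with $0\le\beta<1$. Then the Riemannian Hessian of $f$ at $M^\star$ (with $\mathcal M_k$ viewed as a Riemannian submanifold of $\mathbb{R}^{m\times n}$ with the Frobenius inner product, so that $\langle\operatorname{Hess}f(M^\star)[Z],Z\rangle=\frac{d^2}{dt^2}f(\operatorname{Exp}_{M^\star}(tZ))|_{t=0}$ for the exponential map $\operatorname{Exp}$) is positive definite: $$\min_{0\ne W\in T_{M^\star}\mathcal M_k}\frac{\langle\operatorname{Hess}f(M^\star)[W],W\rangle}{\|W\|_F^2}\ge 1-\beta>0.$$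
   Context: $\mathcal M_k$ is the set of real $m\times n$ matrices of rank exactly $k$, a smooth manifold; $\langle A,B\rangle=\operatorname{tr}(A^TB)$. Assumption RPD$(M^\star,\beta)$: $(1-\beta)\|X-M^\star\|_F^2\le\langle X-M^\star,\mathcal A(X-M^\star)\rangle\le(1+\beta)\|X-M^\star\|_F^2$ for all $X\in\mathcal M_k$. *)

From HB Require Import structures.
From mathcomp Require Import all_boot all_order all_algebra.
From mathcomp Require Import all_classical all_reals all_analysis.
Set Implicit Arguments. Unset Strict Implicit. Unset Printing Implicit Defensive.
Import Order.TTheory GRing.Theory Num.Theory.
Local Open Scope ring_scope.

Definition frob (R : realType) (m n : nat) (A B : 'M[R]_(m, n)) : R :=
  \tr (A^T *m B).

Definition rankk (R : realType) (m n k : nat) (X : 'M[R]_(m, n)) : Prop :=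
  \rank X = k.

Definition mxderivable (R : realType) (m n : nat) (g : R -> 'M[R]_(m, n)) (t : R) : Prop :=
  forall i j, derivable (fun s => g s i j) t 1.

Definition mxderive (R : realType) (m n : nat) (g : R -> 'M[R]_(m, n)) (t : R) : 'M[R]_(m, n) :=
  \matrix_(i, j) (derive1 (fun s => g s i j) t).

Definition tangent (R : realType) (m n k : nat) (M W : 'M[R]_(m, n)) : Prop :=
  exists (g : R -> 'M[R]_(m, n)) (eps : R), 0 < eps /\
    (forall t, `|t| < eps -> rankk k (g t)) /\ g 0 = M /\
    mxderivable g 0 /\ mxderive g 0 = W.

(* Geodesic of M_k as a Riemannian submanifold of (R^{m x n}, Frobenius):
   a twice differentiable curve in M_k whose acceleration is normal to the
   tangent space at every point. *)
Definition geodesic (R : realType) (m n k : nat) (g : R -> 'M[R]_(m, n)) (eps : R) : Prop :=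
  0 < eps /\
  forall t, `|t| < eps ->
    [/\ rankk k (g t), mxderivable g t, mxderivable (mxderive g) t &
        forall Z, tangent k (g t) Z -> frob (mxderive (mxderive g) t) Z = 0].

Definition linear_op (R : realType) (m n : nat) (A : 'M[R]_(m, n) -> 'M[R]_(m, n)) : Prop :=
  forall (a : R) X Y, A (a *: X + Y) = a *: A X + A Y.

Definition symmetric_op (R : realType) (m n : nat) (A : 'M[R]_(m, n) -> 'M[R]_(m, n)) : Prop :=
  forall X Y, frob X (A Y) = frob (A X) Y.

Definition psd_op (R : realType) (m n : nat) (A : 'M[R]_(m, n) -> 'M[R]_(m, n)) : Prop :=
  forall X, 0 <= frob X (A X).

Definition RPD (R : realType) (m n k : nat) (A : 'M[R]_(m, n) -> 'M[R]_(m, n))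
  (Ms : 'M[R]_(m, n)) (beta : R) : Prop :=
  forall X, rankk k X ->
    (1 - beta) * frob (X - Ms) (X - Ms) <= frob (X - Ms) (A (X - Ms)) /\
    frob (X - Ms) (A (X - Ms)) <= (1 + beta) * frob (X - Ms) (X - Ms).

Definition fobj (R : realType) (m n : nat) (A : 'M[R]_(m, n) -> 'M[R]_(m, n))
  (Bs X : 'M[R]_(m, n)) : R :=
  2^-1 * frob X (A X) - frob Bs X.

From HB Require Import structures.
From mathcomp Require Import all_boot all_order all_algebra.
From mathcomp Require Import all_classical all_reals all_analysis.
From mathcomp Require Import lra.
Import Order.TTheory GRing.Theory Num.Theory.
Import numFieldNormedType.Exports.
Set Implicit Arguments. Unset Strict Implicit.
Local Open Scope ring_scope.

(* Since the gradient A (X - Ms) of f vanishes at Ms, along any twice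
   differentiable curve g in M_k with g 0 = Ms the second derivative of
   f (g t) at 0 is <W, A W> with W = g'(0); in particular the normal part of
   the acceleration of a geodesic does not contribute.  Replacing A by
   (1 - beta) Id gives an objective fb with fb X - fb Ms = (1 - beta)/2 |X - Ms|^2,
   so RPD says exactly that f - fb, restricted to M_k, is minimal at Ms.  Hence
   t |-> f (g t) - fb (g t) has a local minimum at 0, and the second-order
   necessary condition gives <W, A W> - (1 - beta) |W|^2 >= 0. *)

Section Frobenius.
Variable R : realType.

Lemma frobE m n (X Y : 'M[R]_(m, n)) :
  frob X Y = \sum_(i < n) \sum_(j < m) X j i * Y j i.
Proof.
rewrite /frob /mxtrace; apply: eq_bigr => i _; rewrite mxE.
by apply: eq_bigr => j _; rewrite mxE.
Qed.

Lemma frobC m n (X Y : 'M[R]_(m, n)) : frob X Y = frob Y X.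
Proof. by rewrite !frobE; apply: eq_bigr => i _; apply: eq_bigr => j _; rewrite mulrC. Qed.

Lemma frobBr m n (X Y Z : 'M[R]_(m, n)) : frob X (Y - Z) = frob X Y - frob X Z.
Proof.
rewrite !frobE -sumrB; apply: eq_bigr => i _; rewrite -sumrB.
by apply: eq_bigr => j _; rewrite !mxE mulrBr.
Qed.

Lemma frobBl m n (X Y Z : 'M[R]_(m, n)) : frob (X - Y) Z = frob X Z - frob Y Z.
Proof. by rewrite frobC frobBr !(frobC Z). Qed.

Lemma frobZr m n (a : R) (X Y : 'M[R]_(m, n)) : frob X (a *: Y) = a * frob X Y.
Proof.
rewrite !frobE mulr_sumr; apply: eq_bigr => i _; rewrite mulr_sumr.
by apply: eq_bigr => j _; rewrite mxE mulrCA.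
Qed.

Lemma frob0r m n (X : 'M[R]_(m, n)) : frob X 0 = 0.
Proof. by rewrite -(scale0r 0) frobZr mul0r. Qed.

Lemma frob_is_derive m n (u v : R -> 'M[R]_(m, n)) (t : R) (du dv : 'M[R]_(m, n)) :
  (forall i j, is_derive t 1 (fun s => u s i j) (du i j)) ->
  (forall i j, is_derive t 1 (fun s => v s i j) (dv i j)) ->
  is_derive t 1 (fun s => frob (u s) (v s)) (frob du (v t) + frob (u t) dv).
Proof.
move=> du_t dv_t.
have -> : (fun s => frob (u s) (v s)) =
    \sum_(i < n) \sum_(j < m) ((fun s => u s j i) * (fun s => v s j i)).
  by apply/funext => s; rewrite frobE !fct_sumE; apply: eq_bigr => i _; rewrite fct_sumE.
apply: is_derive_eq.
rewrite !frobE -big_split; apply: eq_bigr => i _; rewrite -big_split.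
by apply: eq_bigr => j _; rewrite /= [RHS]addrC [du j i * _]mulrC.
Qed.

Lemma mxderivable_is_derive m n (g : R -> 'M[R]_(m, n)) (t : R) :
  mxderivable g t -> forall i j, is_derive t 1 (fun s => g s i j) (mxderive g t i j).
Proof. by move=> dg i j; rewrite mxE derive1E; apply: derivableP; apply: dg. Qed.

End Frobenius.

Section LinearOperator.
Variables (R : realType) (m n : nat) (A : 'M[R]_(m, n) -> 'M[R]_(m, n)).
Hypothesis linA : linear_op A.

Lemma linear_op0 : A 0 = 0.
Proof.
have := linA 1 0 0; rewrite !scale1r addr0 => A0.
by apply: (@addrI _ (A 0)); rewrite addr0 -A0.
Qed.

Lemma linear_opD X Y : A (X + Y) = A X + A Y.
Proof. by have := linA 1 X Y; rewrite !scale1r. Qed.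

Lemma linear_opZ a X : A (a *: X) = a *: A X.
Proof. by have := linA a X 0; rewrite !addr0 linear_op0 addr0. Qed.

Lemma linear_opB X Y : A (X - Y) = A X - A Y.
Proof. by rewrite linear_opD -scaleN1r linear_opZ scaleN1r. Qed.

Lemma linear_op_sum I (r : seq I) (F : I -> 'M[R]_(m, n)) :
  A (\sum_(i <- r) F i) = \sum_(i <- r) A (F i).
Proof. exact: (big_morph A linear_opD linear_op0). Qed.

Lemma linear_op_entry X i j :
  A X i j = \sum_(k < m) \sum_(l < n) X k l * A (delta_mx k l) i j.
Proof.
rewrite {1}(matrix_sum_delta X) linear_op_sum summxE; apply: eq_bigr => k _.
by rewrite linear_op_sum summxE; apply: eq_bigr => l _; rewrite linear_opZ mxE.
Qed.

Lemma linear_op_is_derive (v : R -> 'M[R]_(m, n)) (t : R) (dv : 'M[R]_(m, n)) :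
  (forall i j, is_derive t 1 (fun s => v s i j) (dv i j)) ->
  forall i j, is_derive t 1 (fun s => A (v s) i j) (A dv i j).
Proof.
move=> dv_t i j.
have -> : (fun s => A (v s) i j) =
    \sum_(k < m) \sum_(l < n) (A (delta_mx k l) i j \*: (fun s => v s k l)).
  apply/funext => s; rewrite linear_op_entry !fct_sumE; apply: eq_bigr => k _.
  by rewrite fct_sumE; apply: eq_bigr => l _; rewrite /= mulrC.
apply: is_derive_eq; rewrite linear_op_entry; apply: eq_bigr => k _.
by apply: eq_bigr => l _; rewrite mulrC.
Qed.

End LinearOperator.

Section Objective.
Variables (R : realType) (m n : nat) (A : 'M[R]_(m, n) -> 'M[R]_(m, n)) (Ms : 'M[R]_(m, n)).
Hypotheses (linA : linear_op A) (symA : symmetric_op A).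

Let f X := fobj A (A Ms) X.

Lemma fobj_sub_min X : f X - f Ms = 2^-1 * frob (X - Ms) (A (X - Ms)).
Proof.
rewrite /f /fobj (linear_opB linA) frobBl !frobBr -!symA (frobC X (A Ms)) -symA.
set a := frob X (A X); set b := frob Ms (A X); set c := frob Ms (A Ms); lra.
Qed.

Lemma fobj_curve_is_derive (g : R -> 'M[R]_(m, n)) t : mxderivable g t ->
  is_derive t 1 (fun s => f (g s)) (frob (mxderive g t) (A (g t - Ms))).
Proof.
move=> /mxderivable_is_derive dg.
have dAg := frob_is_derive dg (linear_op_is_derive linA dg).
have dcst i j : is_derive t 1 (fun=> A Ms i j) ((0 : 'M[R]_(m, n)) i j).
  by rewrite mxE; apply: is_derive_cst.
have dBg := frob_is_derive dcst dg.
apply: is_derive_eq.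
rewrite (frobC 0) frob0r (frobC (g t) (A _)) -symA (frobC (A Ms)) (linear_opB linA) frobBr.
set a := frob _ (A (g t)); set b := frob _ (A Ms).
rewrite -[2^-1 *: _]/(2^-1 * (a + a)); lra.
Qed.

Lemma fobj_slope_is_derive (g : R -> 'M[R]_(m, n)) t :
  mxderivable g t -> mxderivable (mxderive g) t -> g t = Ms ->
  is_derive t 1 (fun s => frob (mxderive g s) (A (g s - Ms)))
    (frob (mxderive g t) (A (mxderive g t))).
Proof.
move=> /mxderivable_is_derive dg /mxderivable_is_derive d2g gt.
have dgMs i j : is_derive t 1 (fun s => (g s - Ms) i j) (mxderive g t i j).
  have -> : (fun s => (g s - Ms) i j) = (fun s => g s i j) - cst (Ms i j).
    by apply: funext => s; rewrite !mxE.
  by apply: is_derive_eq; rewrite subr0.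
apply: is_derive_eq (frob_is_derive d2g (linear_op_is_derive linA dgMs)) _.
by rewrite gt subrr (linear_op0 linA) frob0r add0r.
Qed.

Lemma fobj_curve_derive2 (g : R -> 'M[R]_(m, n)) eps : 0 < eps ->
  (forall t, `|t| < eps -> mxderivable g t) -> mxderivable (mxderive g) 0 ->
  g 0 = Ms ->
  derive1 (derive1 (fun t => f (g t))) 0 = frob (mxderive g 0) (A (mxderive g 0)).
Proof.
move=> eps0 dg d2g g0.
have dg0 : mxderivable g 0 by apply: dg; rewrite normr0.
have d2f := fobj_slope_is_derive dg0 d2g g0.
rewrite derive1E -(@derive_val _ _ _ _ _ _ _ d2f).
apply: near_eq_derive; apply/nbhs_ballP; exists eps => // t.
rewrite -ball_normE /= sub0r normrN => /dg dgt.
by rewrite derive1E (@derive_val _ _ _ _ _ _ _ (fobj_curve_is_derive dgt)).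
Qed.

End Objective.

Section SecondOrder.
Variable R : realType.

Lemma is_derive0_lt0_right (h : R -> R) (c : R) :
  is_derive (0 : R) 1 h c -> h 0 = 0 -> c < 0 ->
  exists2 d, 0 < d & forall s, 0 < s < d -> h s < 0.
Proof.
move=> [dh Dh] h0 c0.
have c_lt : c < c / 2 by lra.
have := cvgr_lt c (cvg_toP dh Dh) (c / 2) c_lt.
rewrite /dnbhs /within /= => /(_ (dnbhs_filter 0)) /nbhs_ballP [d d0 near_d].
exists d => // s /andP [s0 sd].
have bs : ball (0 : R) d s by rewrite -ball_normE /= sub0r normrN gtr0_norm.
have := near_d s bs (lt0r_neq0 s0).
rewrite h0 subr0 /GRing.scale /= mulr1 addr0 => hs.
have : s^-1 * h s < 0 by apply: (lt_trans hs); lra.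
by rewrite pmulr_rlt0 // invr_gt0.
Qed.

Lemma local_min_derive2_ge0 (psi dpsi : R -> R) (eps c : R) : 0 < eps ->
  (forall t : R, `|t| < eps -> is_derive t 1 psi (dpsi t)) -> dpsi 0 = 0 ->
  is_derive (0 : R) 1 dpsi c -> (forall t, `|t| < eps -> psi 0 <= psi t) -> 0 <= c.
Proof.
move=> eps0 dpsi_t dpsi0 d2psi psi_min; rewrite leNgt; apply/negP => c0.
have [d d0 dpsi_lt0] := is_derive0_lt0_right d2psi dpsi0 c0.
pose t := Num.min d eps / 2.
have min_gt0 : 0 < Num.min d eps by rewrite lt_min d0.
have t0 : 0 < t by rewrite divr_gt0.
have t_lt_min : t < Num.min d eps by rewrite /t; lra.
have td : t < d by apply: (lt_le_trans t_lt_min); rewrite ge_min lexx.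
have te : t < eps by apply: (lt_le_trans t_lt_min); rewrite ge_min lexx orbT.
have [xi xiI MVTt] : exists2 xi, xi \in `]0, t[%R & psi t - psi 0 = dpsi xi * (t - 0).
  have dpsi_in x : x \in `]0, t[%R -> is_derive x 1 psi (dpsi x).
    by rewrite in_itv /= => /andP [x0 xt]; apply: dpsi_t; rewrite gtr0_norm // (lt_trans xt).
  apply: MVT => //; apply: derivable_within_continuous => x.
  rewrite in_itv /= => /andP [x0 xt].
  have : `|x| < eps by rewrite ger0_norm // (le_lt_trans xt).
  by case/dpsi_t.
have := psi_min t; rewrite gtr0_norm // => /(_ te).
rewrite -subr_ge0 MVTt subr0 leNgt => /negP; apply.
rewrite pmulr_llt0 //; apply: dpsi_lt0.
by move: xiI; rewrite in_itv /= => /andP [-> /lt_trans ->].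
Qed.

End SecondOrder.

Unset Implicit Arguments.

Theorem lemma4p5 (R : realType) (m n k : nat)
  (A : 'M[R]_(m, n) -> 'M[R]_(m, n)) (Ms : 'M[R]_(m, n)) (beta : R) :
  linear_op A -> symmetric_op A -> psd_op A ->
  rankk k Ms ->
  RPD k A Ms beta -> 0 <= beta -> beta < 1 ->
  0 < 1 - beta /\
  forall W : 'M[R]_(m, n), tangent k Ms W -> W != 0 ->
  forall (g : R -> 'M[R]_(m, n)) (eps : R),
    geodesic k g eps -> g 0 = Ms -> mxderive g 0 = W ->
    (1 - beta) * frob W W <=
      derive1 (derive1 (fun t => fobj A (A Ms) (g t))) 0.
Proof.
move=> linA symA _ _ rpd beta0 beta1; split; first lra.
move=> W _ _ g eps [eps0 geo] g0 gW.
have dg t : `|t| < eps -> mxderivable g t by case/geo.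
have [_ dg0 d2g _] := geo 0 ltac:(by rewrite normr0).
pose Ab := fun X : 'M[R]_(m, n) => (1 - beta) *: X.
have linAb : linear_op Ab by move=> a X Y; rewrite /Ab scalerDr !scalerA mulrC.
have symAb : symmetric_op Ab by move=> X Y; rewrite /Ab /= frobZr [RHS]frobC frobZr frobC.
have frobAb X : frob X (Ab X) = (1 - beta) * frob X X by rewrite /Ab /= frobZr.
rewrite (fobj_curve_derive2 linA symA eps0 dg d2g g0) gW.
suff : 0 <= frob W (A W) - frob W (Ab W) by rewrite frobAb; lra.
pose slope B t := frob (mxderive g t) (B (g t - Ms)).
apply: (@local_min_derive2_ge0 _
  (fun t => fobj A (A Ms) (g t) - fobj Ab (Ab Ms) (g t))
  (fun t => slope A t - slope Ab t) eps _ eps0).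
- move=> t /dg dgt.
  exact: is_deriveB (fobj_curve_is_derive Ms linA symA dgt)
                    (fobj_curve_is_derive Ms linAb symAb dgt).
- by rewrite /slope g0 subrr (linear_op0 linA) (linear_op0 linAb) frob0r subrr.
- rewrite -gW; exact: is_deriveB (fobj_slope_is_derive linA dg0 d2g g0)
                                 (fobj_slope_is_derive linAb dg0 d2g g0).
- move=> t /geo [rk _ _ _]; have [rpd_lo _] := rpd _ rk.
  have := fobj_sub_min Ms linA symA (g t); have := fobj_sub_min Ms linAb symAb (g t).
  rewrite g0 frobAb; lra.
Qed.
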